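(* Let $(X,\tau)$ be an extended locally convex space with finest locally convex topology $\tau_F$, and let $Y$ be a linear subspace of $X$. Then the relative topology $\tau_F|_Y$ is the finest locally convex topology of the extended locally convex space $(Y,\tau|_Y)$. Moreover, $(Y,\tau_F|_Y)^*=(Y,\tau|_Y)^*$.
   Context: An extended seminorm on a vector space $X$ over $\mathbb{R}$ or $\mathbb{C}$ is a map $\rho:X\to[0,\infty]$ with $\rho(\alpha x)=|\alpha|\rho(x)$ and $\rho(x+y)\le\rho(x)+\rho(y)$. An extended locally convex space $(X,\tau)$ is a vector space with the topology induced by a family $\{\rho_i\}$ of extended seminorms (neighborhood base at $x_0$: $\{x:\max_{i\in J}\rho_i(x-x_0)<\varepsilon\}$, $J$ finite, $\varepsilon>0$). A locally convex topology is one induced in this way by finite-valued seminorms. The finest locally convex topology of an elcs $(X,\tau)$ is the locally convex topology $\tau_F\subseteq\tau$ on $X$ such that every locally convex topology $\sigma\subseteq\tau$ on $X$ satisfies $\sigma\subseteq\tau_F$. For a topological vector-space-like structure $(Z,\sigma)$, $(Z,\sigma)^*$ denotes the set of $\sigma$-continuous linear functionals on $Z$. *)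

From HB Require Import structures.
From mathcomp Require Import all_boot all_order all_algebra.
From mathcomp Require Import all_classical all_reals all_analysis.
Set Implicit Arguments. Unset Strict Implicit. Unset Printing Implicit Defensive.
Import Order.TTheory GRing.Theory Num.Theory.
Import numFieldNormedType.Exports.
Local Open Scope classical_set_scope.
Local Open Scope ring_scope.

(* Scalars: K : numFieldType (covers R and C = complex R). Extended seminorms
   take values in \bar K, nonnegative (hence "real" for C); |a| is normr. *)

Section Defs.
Variable K : numFieldType.

Definition ext_seminorm (V : lmodType K) (p : V -> \bar K) : Prop :=
  [/\ (forall x, (0 <= p x)%E),
      (forall (a : K) x, p (a *: x) = ((`|a|)%:E * p x)%E) &
      (forall x y : V, (p (x + y)%R <= p x + p y)%E)].

Definition seminorm (V : lmodType K) (p : V -> \bar K) : Prop :=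
  ext_seminorm p /\ (forall x, p x \is a fin_num).

Definition induced_top (V : lmodType K) (I : Type) (rho : I -> V -> \bar K)
  : set (set V) :=
  [set U : set V | forall x0, U x0 -> exists J : set I, finite_set J /\
     exists2 e : K, 0 < e &
       [set x : V | forall i, J i -> (rho i (x - x0)%R < e%:E)%E] `<=` U].

Definition elc_topology (V : lmodType K) (tau : set (set V)) : Prop :=
  exists (I : Type) (rho : I -> V -> \bar K),
    (forall i, ext_seminorm (rho i)) /\ tau = induced_top rho.

Definition lc_topology (V : lmodType K) (tau : set (set V)) : Prop :=
  exists (I : Type) (rho : I -> V -> \bar K),
    (forall i, seminorm (rho i)) /\ tau = induced_top rho.

(* tauF is the finest locally convex topology of the elcs (V, tau);
   sigma `<=` tau means sigma is coarser than tau. *)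
Definition finest_lc_topology (V : lmodType K) (tau tauF : set (set V)) : Prop :=
  [/\ lc_topology tauF, tauF `<=` tau &
      forall sigma, lc_topology sigma -> sigma `<=` tau -> sigma `<=` tauF].

Definition subsp (V : lmodType K) (S : submodClosed V) := {x : V | x \in S}.

Section Sub.
Variables (V : lmodType K) (S : submodClosed V).
HB.instance Definition _ := [isSub for (@sval V (fun x => x \in S)) : subsp S -> V].
HB.instance Definition _ := [Choice of subsp S by <:].
HB.instance Definition _ := [SubChoice_isSubLmodule of subsp S by <:].
End Sub.

Definition rel_top (V : lmodType K) (S : submodClosed V) (tau : set (set V))
  : set (set (subsp S)) :=
  [set W | exists U, tau U /\ W = (val : subsp S -> V) @^-1` U].

Definition cdual (Y : lmodType K) (sigma : set (set Y)) : set (Y -> K) :=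
  [set f | (forall (a : K) x y, f (a *: x + y) = a * f x + f y) /\
           (forall U : set K, open U -> sigma (f @^-1` U))].

End Defs.
Arguments rel_top {K V} S tau _.

From HB Require Import structures.
From mathcomp Require Import all_boot all_order all_algebra.
From mathcomp Require Import all_classical all_reals all_analysis.
From mathcomp Require Import finmap.
Import Order.TTheory GRing.Theory Num.Theory.
Import numFieldNormedType.Exports.
Local Open Scope classical_set_scope.
Local Open Scope ring_scope.
Set Implicit Arguments. Unset Strict Implicit. Unset Printing Implicit Defensive.

(* Write tau as the topology of extended seminorms rho_i. A seminorm q on Y is
   tau|_Y-continuous iff q < 1 on some basic neighbourhood {rho_i < d, i in F}
   of 0; by homogeneity q <= r := d^-1 * sum_(i in F) rho_i on Y `&` N, where
   N is the subspace on which these rho_i are finite. Choose by Zorn linear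
   maps phi : X -> N and psi : X -> Y with phi = id and psi = 0 on N, and
   phi + psi = id on Y; then p := r o phi + q o psi is a finite seminorm on X
   which equals r on N, hence is tau-continuous, and dominates q on Y. The
   topology of p is locally convex and coarser than tau, hence coarser than
   tau_F, so q is tau_F|_Y-continuous: tau_F|_Y is the finest locally convex
   topology below tau|_Y. For the duals, a continuous functional f is
   continuous for the locally convex topology of the seminorm |f|, which is
   coarser than the finest one. *)

Lemma ge0_ltEFinP (K : numFieldType) (u : \bar K) (e : K) : (0 <= u)%E ->
  (u < e%:E)%E <-> u \is a fin_num /\ fine u < e.
Proof.
case: u => [r| |] u0; [by rewrite lte_fin; split=> [|[]]|split=> // -[] //|by []].
Qed.

Definition is_subspace (K : numFieldType) (V : lmodType K) (N : set V) :=
  N 0 /\ forall (a : K) x y, N x -> N y -> N (a *: x + y).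

(* Finite seminorms are handled through their values in K: when K is only a
   numFieldType, \bar K has almost no order arithmetic. *)
Definition real_seminorm (K : numFieldType) (V : lmodType K) (N : set V) (r : V -> K) :=
  [/\ forall x, N x -> 0 <= r x,
      forall a x, N x -> r (a *: x) = `|a| * r x &
      forall x y, N x -> N y -> r (x + y) <= r x + r y].

Section Subspace.
Variables (K : numFieldType) (V : lmodType K).
Implicit Types (N M : set V).

Lemma subspaceZ N a x : is_subspace N -> N x -> N (a *: x).
Proof. by case=> N0 NZD Nx; rewrite -[_ *: x]addr0; apply: NZD. Qed.

Lemma subspaceD N x y : is_subspace N -> N x -> N y -> N (x + y).
Proof. by case=> _ NZD Nx Ny; rewrite -[x]scale1r; apply: NZD. Qed.

Lemma subspaceN N x : is_subspace N -> N x -> N (- x).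
Proof. by rewrite -scaleN1r; apply: subspaceZ. Qed.

Lemma subspaceB N x y : is_subspace N -> N x -> N y -> N (x - y).
Proof. by move=> sN Nx Ny; apply: subspaceD => //; apply: subspaceN. Qed.

Lemma subspace0 : is_subspace [set 0 : V].
Proof. by split=> // a _ _ -> ->; rewrite scaler0 addr0. Qed.

Lemma subspaceI N M : is_subspace N -> is_subspace M -> is_subspace (N `&` M).
Proof.
move=> [N0 NZD] [M0 MZD]; split=> // a x y [Nx Mx] [Ny My].
by split; [apply: NZD|apply: MZD].
Qed.

Lemma subspace_bigcap (I : Type) (D : set I) (N : I -> set V) :
  (forall i, D i -> is_subspace (N i)) -> is_subspace (\bigcap_(i in D) N i).
Proof.
move=> sN; split=> [i /sN[]//|a x y Nx Ny i Di].
by have [_ +] := sN i Di; apply; [apply: Nx|apply: Ny].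
Qed.

End Subspace.

Section Seminorm.
Variables (K : numFieldType) (V : lmodType K).
Implicit Types (N M : set V) (r s : V -> K).

Lemma ext_seminorm0 (p : V -> \bar K) : ext_seminorm p -> p 0 = 0%E.
Proof. by case=> _ pZ _; rewrite -(scale0r 0) pZ normr0 mul0e. Qed.

Lemma subspace_fin_num (p : V -> \bar K) : ext_seminorm p ->
  is_subspace [set x | p x \is a fin_num].
Proof.
move=> pS; split=> [|a x y /= px py]; first by rewrite /= ext_seminorm0.
have [p0 pZ pD] := pS.
have pax : p (a *: x) \is a fin_num by rewrite pZ -(fineK px) -EFinM.
have /ge0_ltEFinP[] // : (p (a *: x + y)%R < (fine (p (a *: x)) + fine (p y) + 1)%:E)%E.
by apply: le_lt_trans (pD _ _) _; rewrite -(fineK pax) -(fineK py) -EFinD lte_fin ltrDl.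
Qed.

Lemma real_seminorm_fine (p : V -> \bar K) : ext_seminorm p ->
  real_seminorm [set x | p x \is a fin_num] (fine \o p).
Proof.
move=> pS; have [p0 pZ pD] := pS.
split=> [x _|a x /= px|x y /= px py]; first exact: fine_ge0.
  by rewrite pZ -(fineK px) -EFinM.
have pxy := subspaceD (subspace_fin_num pS) px py.
by rewrite -lee_fin EFinD !fineK.
Qed.

Lemma ext_seminorm_ltD (p : V -> \bar K) x y (a b : K) : ext_seminorm p ->
  (p x < a%:E)%E -> (p y < b%:E)%E -> (p (x + y)%R < (a + b)%:E)%E.
Proof.
move=> pS; have [p0 _ _] := pS.
move=> /(ge0_ltEFinP _ (p0 _))[px ltxa] /(ge0_ltEFinP _ (p0 _))[py ltyb].
have [_ _ pD] := real_seminorm_fine pS.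
apply/ge0_ltEFinP; first exact: p0.
split; first exact: subspaceD (subspace_fin_num pS) px py.
exact: le_lt_trans (pD _ _ px py) (ltrD ltxa ltyb).
Qed.

Lemma ext_seminorm_comp (U : lmodType K) (f : U -> V) (p : V -> \bar K) :
  linear f -> ext_seminorm p -> ext_seminorm (p \o f).
Proof.
move=> /GRing.semilinear_linear[fZ fD] [p0 pZ pD].
by split=> [x|a x|x y] /=; rewrite ?fZ ?fD ?pZ ?pD.
Qed.

Lemma real_seminorm_comp (U : lmodType K) (f : U -> V) (M : set U) N r :
  linear f -> (forall x, M x -> N (f x)) -> real_seminorm N r ->
  real_seminorm M (r \o f).
Proof.
move=> /GRing.semilinear_linear[fZ fD] MN [r0 rZ rD].
split=> [x Mx|a x Mx|x y Mx My] /=; rewrite ?fZ ?fD.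
- exact: r0 (MN _ Mx).
- exact: rZ (MN _ Mx).
- exact: rD (MN _ Mx) (MN _ My).
Qed.

Lemma sub_real_seminorm M N r : M `<=` N -> real_seminorm N r -> real_seminorm M r.
Proof.
move=> MN [r0 rZ rD]; split=> [x /MN|a x /MN|x y /MN Nx /MN Ny]; [exact: r0|exact: rZ|].
exact: rD.
Qed.

Lemma real_seminorm_le N r s : is_subspace N -> real_seminorm N r -> real_seminorm N s ->
  (forall x, N x -> s x < 1 -> r x < 1) -> forall x, N x -> r x <= s x.
Proof.
move=> sN [r0 rZ _] [s0 sZ _] sr x Nx.
rewrite real_leNgt ?ger0_real ?r0 ?s0 //; apply/negP => srx.
have rx0 : 0 < r x := le_lt_trans (s0 x Nx) srx.
have : r ((r x)^-1 *: x) < 1.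
  apply: sr; first exact: subspaceZ.
  by rewrite sZ // gtr0_norm ?invr_gt0 // ltr_pdivrMl // mulr1.
by rewrite rZ // gtr0_norm ?invr_gt0 // mulVf ?gt_eqF // ltxx.
Qed.

Lemma real_seminormD N r s : real_seminorm N r -> real_seminorm N s ->
  real_seminorm N (fun x => r x + s x).
Proof.
move=> [r0 rZ rD] [s0 sZ sD]; split=> [x Nx|a x Nx|x y Nx Ny].
- by rewrite addr_ge0 ?r0 ?s0.
- by rewrite rZ ?sZ ?mulrDr.
- by rewrite addrACA lerD ?rD ?sD.
Qed.

Lemma real_seminorm_sum (I : eqType) (t : seq I) N (r : I -> V -> K) :
  {in t, forall i, real_seminorm N (r i)} ->
  real_seminorm N (fun x => \sum_(i <- t) r i x).
Proof.
move=> rS; split=> [x Nx|a x Nx|x y Nx Ny]; rewrite ?mulr_sumr -?big_split !big_seq.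
- by apply: sumr_ge0 => i /rS[+ _ _]; apply.
- by apply: eq_bigr => i /rS[_ + _]; apply.
- by apply: ler_sum => i /rS[_ _ +]; apply.
Qed.

Lemma real_seminormZ N (c : K) r : 0 <= c -> real_seminorm N r ->
  real_seminorm N (fun x => c * r x).
Proof.
move=> c0 [r0 rZ rD]; split=> [x Nx|a x Nx|x y Nx Ny].
- by rewrite mulr_ge0 ?r0.
- by rewrite rZ // mulrCA.
- by rewrite -mulrDr ler_wpM2l ?rD.
Qed.

Lemma seminorm_EFin r : real_seminorm setT r -> seminorm (fun x => (r x)%:E).
Proof.
move=> [r0 rZ rD]; split=> //; split=> [x|a x|x y].
- by rewrite lee_fin r0.
- by rewrite rZ.
- by rewrite -EFinD lee_fin rD.
Qed.

End Seminorm.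

Section Complement.
Variables (K : numFieldType) (V : lmodType K).
Implicit Types (A C E : set V).

Definition add_line E (b : V) : set V := [set e + t *: b | e in E & t in [set: K]].

Lemma subspace_add_line E b : is_subspace E -> is_subspace (add_line E b).
Proof.
move=> [E0 EZD]; split; first by exists 0 => //; exists 0; rewrite ?scale0r ?addr0.
move=> a _ _ [e1 E1 [t1 _ <-]] [e2 E2 [t2 _ <-]].
exists (a *: e1 + e2); first exact: EZD.
by exists (a * t1 + t2) => //; rewrite scalerDr scalerA scalerDl addrACA.
Qed.

Lemma sub_add_line E b : E `<=` add_line E b.
Proof. by move=> e Ee; exists e => //; exists 0; rewrite ?scale0r ?addr0. Qed.

Lemma add_line_disjoint A E b : is_subspace A -> is_subspace E -> A `&` E `<=` [set 0] ->
  (forall a, A a -> ~ E (b - a)) -> A `&` add_line E b `<=` [set 0].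
Proof.
move=> sA sE AE bAE x [Ax [e Ee [t _ xE]]].
have [t0|t0] := eqVneq t 0; first by apply: AE; split; rewrite // -xE t0 scale0r addr0.
exfalso; apply: (bAE (t^-1 *: x)); first exact: subspaceZ.
rewrite -xE scalerDr scalerA mulVf // scale1r opprD addrCA subrr addr0 -scaleNr.
exact: subspaceZ.
Qed.

Lemma exists_complement A C : is_subspace A -> is_subspace C -> A `&` C `<=` [set 0] ->
  exists E, [/\ is_subspace E, C `<=` E, A `&` E `<=` [set 0] &
    forall x, exists2 a, A a & E (x - a)].
Proof.
move=> sA sC AC.
(* Maximizing E with C `|` E admissible, rather than E itself, makes the
   union of the empty chain admissible. *)
pose P := [set E | is_subspace (C `|` E) /\ A `&` (C `|` E) `<=` [set 0]].
have [E [[sCE ACE] Emax]] : exists E, P E /\ forall E', E `<` E' -> ~ P E'.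
  apply: Zorn_bigcup => F FP Ftot.
  have common u v : (C `|` \bigcup_(E in F) E) u -> (C `|` \bigcup_(E in F) E) v ->
      (C u /\ C v) \/ exists2 E, F E & (C `|` E) u /\ (C `|` E) v.
    case=> [Cu|[E1 F1 u1]] [Cv|[E2 F2 v2]]; first by left.
    - by right; exists E2 => //; split; [left|right].
    - by right; exists E1 => //; split; [right|left].
    have [E12|E21] := Ftot _ _ F1 F2.
      by right; exists E2 => //; split; right => //; apply: E12.
    by right; exists E1 => //; split; right => //; apply: E21.
  split.
    split=> [|a u v Fu Fv]; first by left; case: sC.
    case: (common u v Fu Fv) => [[Cu Cv]|[E FE [Eu Ev]]].
      by left; case: sC => _; apply.
    have [[_ +] _] := FP E FE => /(_ a u v Eu Ev)[|]; first by left.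
    by right; exists E.
  move=> x [Ax [Cx|[E FE Ex]]]; first exact: AC.
  by have [_ +] := FP E FE; apply; split=> //; right.
exists (C `|` E); split=> // b; apply: contrapT => nb.
have nbA a : A a -> ~ (C `|` E) (b - a) by move=> Aa bCE; apply: nb; exists a.
pose E' := add_line (C `|` E) b.
have CE' : C `<=` E' by move=> c Cc; apply: sub_add_line; left.
apply: (Emax E'); last first.
  rewrite /P /= (setUidr CE'); split; first exact: subspace_add_line.
  exact: add_line_disjoint.
split=> [e Ee|E'E]; first by apply: sub_add_line; right.
apply: (nbA 0); first by case: sA.
rewrite subr0; right; apply: E'E; exists 0; first by case: sCE.
by exists 1; rewrite ?scale1r ?add0r.
Qed.

Lemma exists_projection A C : is_subspace A -> is_subspace C -> A `&` C `<=` [set 0] ->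
  exists P : V -> V, [/\ linear P, forall x, A (P x),
    forall a, A a -> P a = a & forall c, C c -> P c = 0].
Proof.
move=> sA sC AC; have [E [sE CE AE AEx]] := exists_complement sA sC AC.
have uniq x a a' : A a -> E (x - a) -> A a' -> E (x - a') -> a = a'.
  move=> Aa Ea Aa' Ea'; apply/eqP; rewrite -subr_eq0; apply/eqP/AE; split.
    exact: subspaceB.
  by rewrite -(subrKA x) -opprB addrC; apply: subspaceB.
have /choice[P PE] : forall x, exists a, A a /\ E (x - a).
  by move=> x; have [a Aa Ea] := AEx x; exists a.
exists P; split=> [a u v|x|a Aa|c Cc].
- have [Au Eu] := PE u; have [Av Ev] := PE v.
  apply: (uniq (a *: u + v)); [exact: (PE _).1|exact: (PE _).2| |].
    by case: sA => _; apply.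
  by rewrite opprD addrACA -scalerBr; case: sE => _; apply.
- exact: (PE x).1.
- by apply: (uniq a) => //; [exact: (PE a).1|exact: (PE a).2|rewrite subrr; case: sE].
- by apply: (uniq c); [exact: (PE c).1|exact: (PE c).2|case: sA|rewrite subr0; apply: CE].
Qed.

Lemma exists_projection_pair (N Y : set V) : is_subspace N -> is_subspace Y ->
  exists phi psi : V -> V, [/\ linear phi, linear psi,
    forall x, N (phi x) /\ Y (psi x),
    forall n, N n -> phi n = n /\ psi n = 0 &
    forall y, Y y -> phi y + psi y = y].
Proof.
move=> sN sY; have sNY := subspaceI sN sY.
have [E [sE _ NYE NYEx]] := exists_complement sNY (subspace0 V) (@subIsetr _ _ _).
have sEY := subspaceI sE sY.
have NEY : N `&` (E `&` Y) `<=` [set 0] by move=> x [Nx [Ex Yx]]; apply: NYE.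
have [phi [phiL phiN phi_id phi0]] := exists_projection sN sEY NEY.
have EYN : (E `&` Y) `&` N `<=` [set 0] by rewrite setIC.
have [psi [psiL psiEY psi_id psi0]] := exists_projection sEY sN EYN.
exists phi, psi; split=> // [x|n Nn|y Yy]; first by split; [exact: phiN|case: (psiEY x)].
  by rewrite phi_id ?psi0.
have [m [Nm Ym] Em] := NYEx y; have EYc : (E `&` Y) (y - m) by split=> //; exact: subspaceB.
have [_ phiD] := GRing.semilinear_linear phiL; have [_ psiD] := GRing.semilinear_linear psiL.
by rewrite -(subrKC m y) phiD psiD phi_id // phi0 // psi0 // psi_id // addr0 add0r.
Qed.
End Complement.

Section Extension.
Variables (K : numFieldType) (X : lmodType K) (Y : submodClosed X).

Lemma seminorm_extension (N : set X) (r : X -> K) (q : subsp Y -> \bar K) :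
  is_subspace N -> real_seminorm N r -> seminorm q ->
  (forall y, N (val y) -> (q y <= (r (val y))%:E)%E) ->
  exists2 p, seminorm p &
    (forall y, (q y <= p (val y))%E) /\ (forall x, N x -> p x = (r x)%:E).
Proof.
move=> sN rS [qS qfin] qr.
have sY : is_subspace [set x | x \in Y].
  by split=> [|a x y /= Yx Yy]; rewrite /= ?rpred0 ?rpredD ?rpredZ.
have [phi [psi [phiL psiL ranges onN onY]]] := exists_projection_pair sN sY.
pose psi' x : subsp Y := exist _ (psi x) (ranges x).2.
have psi'L : linear psi' by move=> a u v; apply: val_inj; rewrite /= psiL.
have fqS := real_seminorm_fine qS; have [_ _ fqD] := fqS.
exists (fun x => (r (phi x) + fine (q (psi' x)))%:E).
  apply/seminorm_EFin/real_seminormD.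
    exact: (real_seminorm_comp phiL (fun x _ => (ranges x).1) rS).
  exact: (real_seminorm_comp psi'L (fun x _ => qfin (psi' x)) fqS).
split=> [y|x Nx]; last first.
  have [-> psix] := onN x Nx; have -> : psi' x = 0 by apply: val_inj.
  by rewrite ext_seminorm0 ?addr0.
pose m := y - psi' (val y).
have mE : val m = phi (val y) by rewrite /= -[X in X - _](onY _ (valP y)) addrK.
rewrite -(fineK (qfin y)) lee_fin -[y in q y](subrK (psi' (val y))).
apply: le_trans (fqD _ _ (qfin _) (qfin _)) _; rewrite lerD // -lee_fin fineK //.
by rewrite -mE; apply: qr; rewrite mE; exact: (ranges _).1.
Qed.
End Extension.

Lemma finite_near_pos (K : numFieldType) (T : Type) (J : set T) (P : T -> K -> Prop) :
  finite_set J -> (forall j, J j -> \forall d \near 0^'+, P j d) ->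
  exists2 d, 0 < d & forall j, J j -> P j d.
Proof.
elim/Pchoice: T J P => T J P /finite_fsetP[D ->] PJ.
have /filter_ex[d [d0 Pd]] : \forall d \near (0 : K)^'+,
    0 < d /\ (\bigcap_(j in [set` D]) P j) d.
  by apply: filterI; [exact: nbhs_right_gt|exact: filter_bigI].
by exists d => // j Dj; apply: Pd.
Qed.

Section InducedTopology.
Variables (K : numFieldType) (V : lmodType K) (I : Type) (rho : I -> V -> \bar K).

Definition sball (J : set I) (x0 : V) (e : K) : set V :=
  [set x | forall i, J i -> (rho i (x - x0) < e%:E)%E].

Lemma sball_open J x0 e : (forall i, ext_seminorm (rho i)) -> finite_set J ->
  induced_top rho (sball J x0 e).
Proof.
move=> rhoS fJ x1 x1J; exists J; split=> //.
have [d d0 dP] : exists2 d, 0 < d & forall i, J i ->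
    forall x, (rho i (x - x1) < d%:E)%E -> (rho i (x - x0) < e%:E)%E.
  apply: finite_near_pos => // i Ji.
  have [rho0 _ _] := rhoS i.
  have [fin1 lt1] := (ge0_ltEFinP _ (rho0 _)).1 (x1J i Ji).
  near=> d => x xd; rewrite -(subrKA x1) -[e](subrKC d).
  apply: ext_seminorm_ltD (rhoS i) xd _; rewrite -(fineK fin1) lte_fin ltrBrDr -ltrBrDl.
  by near: d; apply: nbhs_right_lt; rewrite subr_gt0.
by exists d => // x xd i Ji; apply: dP (xd i Ji).
Unshelve. all: by end_near.
Qed.
End InducedTopology.

Definition induced_cont0 (K : numFieldType) (V : lmodType K) (I : Type)
    (rho : I -> V -> \bar K) (p : V -> \bar K) :=
  forall e, 0 < e -> exists J : set I, finite_set J /\ exists2 d, 0 < d &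
    forall x, (forall i, J i -> (rho i x < d%:E)%E) -> (p x < e%:E)%E.

Section InducedTopologyComparison.
Variables (K : numFieldType) (V : lmodType K) (I J : Type).
Variables (rho : I -> V -> \bar K) (p : J -> V -> \bar K).

Lemma induced_top_subset : (forall j, induced_cont0 rho (p j)) ->
  induced_top p `<=` induced_top rho.
Proof.
move=> pc U Uo x0 Ux0; have [F [fF [e e0 sU]]] := Uo x0 Ux0.
have /choice[G Gj] := fun j => pc j e e0.
exists (\bigcup_(j in F) G j); split.
  by apply: bigcup_finite => // j _; case: (Gj j).
have [d d0 dF] : exists2 d, 0 < d & forall j, F j ->
    forall x, (forall i, G j i -> (rho i x < d%:E)%E) -> (p j x < e%:E)%E.
  apply: finite_near_pos => // j _; have [_ [dj dj0 djP]] := Gj j.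
  near=> d => x xd; apply: djP => i Gi; apply: lt_le_trans (xd i Gi) _.
  by rewrite lee_fin; near: d; exact: nbhs_right_ltW.
exists d => // x xd; apply: sU => j Fj; apply: (dF j Fj) => i Gi.
by apply: (xd i); exists j.
Unshelve. all: by end_near.
Qed.

Lemma induced_cont0_subset : (forall j, ext_seminorm (p j)) ->
  induced_top p `<=` induced_top rho -> forall j, induced_cont0 rho (p j).
Proof.
move=> pS sub j e e0.
have /(_ 0)[] : induced_top rho (sball p [set j] 0 e).
- by apply: sub; apply: sball_open => //; exact: finite_set1.
- by move=> i ->; rewrite subr0 ext_seminorm0.
move=> F [fF [d d0 dP]]; exists F; split=> //; exists d => // x xd.
by have := dP x _ j erefl; rewrite subr0; apply=> i Fi; rewrite subr0; apply: xd.
Qed.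

End InducedTopologyComparison.

Lemma induced_top_bigcup (K : numFieldType) (V : lmodType K) (I : Type)
    (rho : I -> V -> \bar K) (F : set (set V)) :
  F `<=` induced_top rho -> induced_top rho (\bigcup_(U in F) U).
Proof.
move=> Fo x0 [U FU Ux0]; have [J [fJ [e e0 sU]]] := Fo U FU x0 Ux0.
by exists J; split=> //; exists e => // x /sU; exists U.
Qed.

Section RelativeTopology.
Variables (K : numFieldType) (X : lmodType K) (Y : submodClosed X).

Lemma linear_val : linear (val : subsp Y -> X).
Proof. by []. Qed.

Lemma rel_top_subset (T T' : set (set X)) : T `<=` T' -> rel_top Y T `<=` rel_top Y T'.
Proof. by move=> TT' _ [U [TU ->]]; exists U; split=> //; apply: TT'. Qed.

Lemma rel_top_local (T : set (set X)) (W : set (subsp Y)) :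
  (forall F, F `<=` T -> T (\bigcup_(U in F) U)) ->
  (forall y0, W y0 -> exists U, [/\ T U, U (val y0) & val @^-1` U `<=` W]) ->
  rel_top Y T W.
Proof.
move=> Tcup Wloc; exists (\bigcup_(U in [set U | T U /\ val @^-1` U `<=` W]) U).
split; first by apply: Tcup => U [].
apply/seteqP; split=> [y Wy|y [U [_ UW] Uy]]; last exact: UW.
by have [U [TU Uy UW]] := Wloc y Wy; exists U.
Qed.

Lemma rel_top_induced (I : Type) (rho : I -> X -> \bar K) :
  (forall i, ext_seminorm (rho i)) ->
  rel_top Y (induced_top rho) = induced_top (fun i (y : subsp Y) => rho i (val y)).
Proof.
move=> rhoS; apply/seteqP; split=> [_ [U [Uo ->]] y0 Uy0|W Wo].
  have [J [fJ [e e0 sU]]] := Uo _ Uy0.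
  by exists J; split=> //; exists e => // y yJ; apply: sU.
apply: rel_top_local => [F|y0 Wy0]; first exact: induced_top_bigcup.
have [J [fJ [e e0 sW]]] := Wo y0 Wy0.
exists (sball rho J (val y0) e); split; first exact: sball_open.
  by move=> i _; rewrite subrr ext_seminorm0.
by move=> y yJ; apply: sW.
Qed.

End RelativeTopology.

Section FiniteSum.
Variables (K : numFieldType) (V : lmodType K) (I : eqType) (rho : I -> V -> \bar K).
Variable s : seq I.
Hypothesis rhoS : forall i, ext_seminorm (rho i).

Definition fin_domain : set V := \bigcap_(i in [set` s]) [set x | rho i x \is a fin_num].

Definition fine_sum (x : V) : K := \sum_(i <- s) fine (rho i x).

Lemma subspace_fin_domain : is_subspace fin_domain.
Proof. by apply: subspace_bigcap => i _; exact: subspace_fin_num. Qed.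

Lemma real_seminorm_fine_sum : real_seminorm fin_domain fine_sum.
Proof.
apply: real_seminorm_sum => i si.
by apply: sub_real_seminorm (real_seminorm_fine (rhoS i)) => x /(_ i si).
Qed.

Lemma fine_le_fine_sum i x : i \in s -> fin_domain x -> fine (rho i x) <= fine_sum x.
Proof.
move=> si xs; rewrite /fine_sum (big_rem _ si) lerDl big_seq sumr_ge0 // => j /mem_rem sj.
by case: (rhoS j) => r0 _ _; apply: fine_ge0; apply: r0.
Qed.

Lemma fine_sum_lt x (d : K) : (forall i, i \in s -> (rho i x < d%:E)%E) ->
  fin_domain x /\ fine_sum x <= d *+ size s.
Proof.
move=> xd; have xfin i : i \in s -> rho i x \is a fin_num /\ fine (rho i x) < d.
  by move=> si; case: (rhoS i) => r0 _ _; apply/(ge0_ltEFinP _ (r0 x))/xd.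
split=> [i /xfin[]//|]; rewrite -[_ *+ _]iter_addr_0 -count_predT -big_const_seq.
by rewrite /fine_sum !big_seq; apply: ler_sum => i /xfin[_ /ltW].
Qed.
End FiniteSum.

Section ContinuousExtension.
Variables (K : numFieldType) (X : lmodType K) (Y : submodClosed X).

Lemma seminorm_le_fine_sum (I : eqType) (rho : I -> X -> \bar K) (s : seq I)
    (q : subsp Y -> \bar K) (d : K) :
  (forall i, ext_seminorm (rho i)) -> seminorm q -> 0 < d ->
  (forall y, (forall i, i \in s -> (rho i (val y) < d%:E)%E) -> (q y < 1%:E)%E) ->
  forall y, fin_domain rho s (val y) -> (q y <= (d^-1 * fine_sum rho s (val y))%:E)%E.
Proof.
move=> rhoS [qS qfin] d0 qd y Ny; have [q0 _ _] := qS.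
have sM : is_subspace [set y : subsp Y | fin_domain rho s (val y)].
  by case: (subspace_fin_domain s rhoS) => N0 NZD; split=> // a u v; apply: NZD.
have rS : real_seminorm (fin_domain rho s) (fun x => d^-1 * fine_sum rho s x).
  by apply: real_seminormZ; [rewrite invr_ge0 ltW|exact: real_seminorm_fine_sum].
rewrite -(fineK (qfin y)) lee_fin.
apply: (@real_seminorm_le _ _ _ (fine \o q) (fun y => d^-1 * fine_sum rho s (val y)) sM) Ny.
- by apply: sub_real_seminorm (real_seminorm_fine qS) => z _; apply: qfin.
- exact: (real_seminorm_comp (@linear_val _ _ Y) (fun y h => h) rS).
move=> z Nz rz; suff /(ge0_ltEFinP _ (q0 z))[] : (q z < 1%:E)%E by [].
apply: qd => i si; have [r0 _ _] := rhoS i.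
apply/(ge0_ltEFinP _ (r0 _)); split; first exact: Nz.
apply: le_lt_trans (fine_le_fine_sum rhoS si Nz) _.
by move: rz; rewrite ltr_pdivrMl // mulr1.
Qed.

Lemma seminorm_extension_cont0 (I : Type) (rho : I -> X -> \bar K)
    (q : subsp Y -> \bar K) :
  (forall i, ext_seminorm (rho i)) -> seminorm q ->
  induced_cont0 (fun i (y : subsp Y) => rho i (val y)) q ->
  exists2 p, seminorm p & (forall y, (q y <= p (val y))%E) /\ induced_cont0 rho p.
Proof.
move=> rhoS qS /(_ 1 ltr01)[J [fJ [d d0 qd]]].
elim/Pchoice: I rho J rhoS fJ qd => I rho J rhoS /finite_seqP[s ->] qd.
have rS : real_seminorm (fin_domain rho s) (fun x => d^-1 * fine_sum rho s x).
  by apply: real_seminormZ; [rewrite invr_ge0 ltW|exact: real_seminorm_fine_sum].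
have [p pS [qp pr]] := seminorm_extension (subspace_fin_domain s rhoS) rS qS
  (seminorm_le_fine_sum rhoS qS d0 qd).
exists p => //; split=> // e e0; exists [set` s]; split=> //.
exists (d * e / (size s).+1%:R); first by rewrite !mulr_gt0 // invr_gt0.
move=> x /(fine_sum_lt rhoS)[Nx xs]; rewrite pr // lte_fin ltr_pdivrMl //.
apply: le_lt_trans xs _; rewrite -[X in X < _]mulr_natr mulrAC ltr_pdivrMr ?ltr0Sn //.
by rewrite ltr_pM2l ?mulr_gt0 // ltr_nat.
Qed.

End ContinuousExtension.

Section FinestLocallyConvex.
Variables (K : numFieldType) (X : lmodType K) (Y : submodClosed X).

Lemma rel_top_finest (I : Type) (rho : I -> X -> \bar K) (tauF : set (set X)) :
  (forall i, ext_seminorm (rho i)) -> finest_lc_topology (induced_top rho) tauF ->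
  finest_lc_topology (rel_top Y (induced_top rho)) (rel_top Y tauF).
Proof.
move=> rhoS [[IF [rhoF [rhoFS tauFE]]] tauF_sub tauF_max]; split.
- exists IF, (fun i (y : subsp Y) => rhoF i (val y)); split.
    by move=> i; case: (rhoFS i) => rS rfin; split=> //; exact: ext_seminorm_comp.
  by rewrite tauFE rel_top_induced // => i; case: (rhoFS i).
- exact: rel_top_subset.
move=> _ [J [q [qS ->]]]; rewrite rel_top_induced // => q_sub.
have qc := induced_cont0_subset (fun j => (qS j).1) q_sub.
have /choice[p pP] : forall j, exists p, [/\ seminorm p,
    forall y, (q j y <= p (val y))%E & induced_cont0 rho p].
  by move=> j; have [p pS [qp pc]] := seminorm_extension_cont0 rhoS (qS j) (qc j); exists p.
have p_sub : induced_top p `<=` tauF.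
  apply: tauF_max; first by exists J, p; split=> // j; case: (pP j).
  by apply: induced_top_subset => j; case: (pP j).
apply: subset_trans (rel_top_subset p_sub); rewrite rel_top_induced; last first.
  by move=> j; case: (pP j) => -[].
apply: induced_top_subset => j e e0; exists [set j]; split; first exact: finite_set1.
by exists e => // y /(_ j erefl); apply: le_lt_trans; case: (pP j).
Qed.

End FinestLocallyConvex.

Section ContinuousDual.
Variables (K : numFieldType) (V : lmodType K).

Lemma seminorm_norm_scalar (f : V -> K) : scalar f -> seminorm (fun x => (`|f x|)%:E).
Proof.
move=> /GRing.semilinear_linear[fZ fD]; apply: seminorm_EFin.
by split=> [x _|a x _|x y _ _]; rewrite ?fZ ?fD ?normrM ?ler_normD.
Qed.

Lemma induced_top_norm_scalar (f : V -> K) (U : set K) : scalar f -> open U ->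
  induced_top (fun _ : unit => fun x => (`|f x|)%:E) (f @^-1` U).
Proof.
move=> fL Uo x0 /Uo /nbhs_ballP[e /= e0 eU]; exists [set tt]; split=> //.
exists e => // x /(_ tt erefl); rewrite lte_fin (GRing.zmod_morphism_linear fL) => fx.
by apply: eU; rewrite /ball /= distrC.
Qed.

Lemma cdual_finest (I : Type) (rho : I -> V -> \bar K) (tauF : set (set V)) :
  (forall i, ext_seminorm (rho i)) -> finest_lc_topology (induced_top rho) tauF ->
  cdual tauF = cdual (induced_top rho).
Proof.
move=> rhoS [_ tauF_sub tauF_max].
apply/seteqP; split=> f [fL fc]; split=> // U Uo; first exact/tauF_sub/fc.
pose normf (_ : unit) x := (`|f x|)%:E.
apply: (tauF_max (induced_top normf)); last exact: induced_top_norm_scalar.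
  by exists unit, normf; split=> // i; exact: seminorm_norm_scalar.
apply: induced_top_subset => j e e0.
have f0 : f 0 = 0 by rewrite -(subrr 0) (GRing.zmod_morphism_linear fL) subrr.
have /(_ 0)[] := fc _ (ball_open (0 : K) e); first by rewrite /= f0; exact: ballxx e0.
move=> J [fJ [d d0 dJ]]; exists J; split=> //; exists d => // x xJ.
have /= := dJ x; rewrite /ball /= sub0r normrN lte_fin; apply=> i Ji.
by rewrite subr0; apply: xJ.
Qed.

End ContinuousDual.

Unset Implicit Arguments.

Theorem theorem4p1 (K : numFieldType) (X : lmodType K) (tau tauF : set (set X))
  (Y : submodClosed X) :
  elc_topology tau -> finest_lc_topology tau tauF ->
  finest_lc_topology (rel_top Y tau) (rel_top Y tauF) /\
  cdual (rel_top Y tauF) = cdual (rel_top Y tau).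
Proof.
move=> [I [rho [rhoS ->]]] tauF_finest.
have Y_finest := rel_top_finest Y rhoS tauF_finest.
split=> //; move: Y_finest; rewrite rel_top_induced // => Y_finest.
apply: cdual_finest Y_finest => i.
exact: ext_seminorm_comp (@linear_val _ _ Y) (rhoS i).
Qed.
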